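(* Let $q$ be a prime power and $n,r$ integers with $1\le r\le\lfloor n/2\rfloor$. Let $\mathcal{C}\subseteq\mathrm{GF}(q)^{r\times(n-r)}$ be any nonempty set of matrices and $I(\mathcal{C}) = \{R({\bf I}_r\mid{\bf C}) : {\bf C}\in\mathcal{C}\}\subseteq E_r(q,n)$. Then $I(\mathcal{C})$ has covering radius $r$, i.e. $\max_{U\in E_r(q,n)}\min_{{\bf C}\in\mathcal{C}} d_{\mathrm{I}}(U, R({\bf I}_r\mid{\bf C})) = r$.
   Context: $E_r(q,n)$ is the set of $r$-dimensional subspaces of $\mathrm{GF}(q)^n$; $R({\bf M})$ is the row space of a matrix ${\bf M}$; the injection distance is $d_{\mathrm{I}}(U,V)=\dim(U+V)-\min\{\dim U,\dim V\}$. *)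

From mathcomp Require Import all_boot all_order all_algebra all_field.
Set Implicit Arguments. Unset Strict Implicit. Unset Printing Implicit Defensive.
Import GRing.Theory.
Local Open Scope ring_scope.

(* Subspaces of GF(q)^n are represented by (row spaces of) matrices with n
   columns, via mxalgebra; R(M) is the row space of M. *)
Definition injdist (F : fieldType) (k l n : nat)
  (A : 'M[F]_(k, n)) (B : 'M[F]_(l, n)) : nat :=
  (\rank (A + B)%MS - minn (\rank A) (\rank B))%N.

From mathcomp Require Import all_boot all_order all_algebra all_field.
Set Implicit Arguments.
Unset Strict Implicit.
Unset Printing Implicit Defensive.

Import Order.TTheory GRing.Theory.
Local Open Scope ring_scope.

(* Two r-dimensional spaces span at most 2r dimensions, so every U is within
   distance r of every R(I_r | C).  Conversely, since r <= n - r there is an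
   r-dimensional U = R(0 | V) supported on the last n - r coordinates; a
   vector of R(I_r | C) vanishing on the first r coordinates is zero, so U
   meets every R(I_r | C) trivially and is at distance exactly r from all of
   them. *)

Section InjectionDistance.

Variables (F : fieldType) (k l n : nat).
Implicit Types (A : 'M[F]_(k, n)) (B : 'M[F]_(l, n)).

Lemma injdist_leq_max A B : (injdist A B <= maxn (\rank A) (\rank B))%N.
Proof.
rewrite /injdist leq_subLR addn_min_max.
by case: (mxrank_adds_leqif A B).
Qed.

Lemma injdist_disjoint A B :
  (A :&: B)%MS = 0 -> injdist A B = maxn (\rank A) (\rank B).
Proof. by move=> AB0; rewrite /injdist mxrank_disjoint_sum // -addn_min_max addKn. Qed.

End InjectionDistance.

Section SystematicSpaces.

Variables (F : fieldType) (r m : nat).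

Lemma rank_row_1mx (C : 'M[F]_(r, m)) : \rank (row_mx 1%:M C) = r.
Proof.
apply/eqP; rewrite eqn_leq rank_leq_row /=.
have := mxrankM_maxl (row_mx 1%:M C) (col_mx 1%:M 0).
by rewrite mul_row_col mulmx1 mulmx0 addr0 mxrank1.
Qed.

Lemma capmx_row_0mx_1mx k (A : 'M[F]_(k, m)) (C : 'M[F]_(r, m)) :
  (row_mx 0 A :&: row_mx 1%:M C)%MS = 0.
Proof.
apply/eqP; rewrite -submx0; set W := (_ :&: _)%MS.
have /submxP [X defW] : (W <= row_mx 1%:M C)%MS by apply: capmxSr.
have /submxP [Y defW'] : (W <= row_mx 0 A)%MS by apply: capmxSl.
have lW_X : lsubmx W = X by rewrite defW mul_mx_row row_mxKl mulmx1.
have lW_0 : lsubmx W = 0 by rewrite defW' mul_mx_row row_mxKl mulmx0.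
by rewrite defW -lW_X lW_0 mul0mx.
Qed.

End SystematicSpaces.

Theorem lemma9 (F : finFieldType) (r m : nat) (Cs : {set 'M[F]_(r, m)}) :
  (1 <= r)%N -> (r <= m)%N -> Cs != set0 ->
  \max_(U : 'M[F]_(r, r + m) | \rank U == r)
     \big[minn/(r + m)%N]_(C in Cs) injdist U (row_mx (1%:M : 'M[F]_r) C)
  = r.
Proof.
move=> _ le_rm /set0Pn [C0 C0_in].
apply/eqP; rewrite eqn_leq; apply/andP; split.
  apply/bigmax_leqP => U /eqP rkU.
  apply: leq_trans (@bigmin_le_cond _ nat _ _ C0 _ _ C0_in) _.
  by rewrite (leq_trans (injdist_leq_max _ _)) // rkU rank_row_1mx maxnn.
pose U0 : 'M[F]_(r, r + m) := row_mx 0 (pid_mx r).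
have rkU0 : \rank U0 = r by rewrite rank_row_0mx rank_pid_mx.
apply: leq_trans (leq_bigmax_cond _ (introT eqP rkU0)).
apply: (big_ind (leq r)) => [|x y rx ry|C _]; first exact: leq_addr.
  by rewrite leq_min rx ry.
by rewrite injdist_disjoint ?capmx_row_0mx_1mx // rkU0 rank_row_1mx maxnn.
Qed.
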